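(* Let $0\le a\le b\le1$, and in $l_\infty^2$ let $H_1=\{(\xi_1,\xi_2):\xi_2\ge -a\xi_1\}$ and $H_2=\{(\xi_1,\xi_2):\xi_2\le b\xi_1\}$ with the restricted metrics. Let $X$ be the gluing of $H_1$ and $H_2$ along $\mathbb{R}$ via the isometries $\xi\mapsto(\xi,-a\xi)\in H_1$ and $\xi\mapsto(\xi,b\xi)\in H_2$ (i.e. identifying $(\xi,-a\xi)$ with $(\xi,b\xi)$). Then $X$ is hyperconvex if and only if $a=b=0$ or $a=b=1$.
   Context: $l_\infty^2$ is $\mathbb{R}^2$ with the metric $d((\xi_1,\xi_2),(\eta_1,\eta_2))=\max(|\xi_1-\eta_1|,|\xi_2-\eta_2|)$. A metric space is hyperconvex if every collection of closed balls $\{B(x_i,r_i)\}$ with $d(x_i,x_j)\le r_i+r_j$ has non-empty intersection. The gluing of $X_1,X_2$ along $A$ via isometric embeddings $\varphi_k\colon A\to X_k$ with closed images is $X_1\sqcup X_2/(\varphi_1(a)\sim\varphi_2(a))$ with metric $d_k$ on $X_k$ and $d(x,y)=\inf_{a\in A}\{d_1(x,\varphi_1(a))+d_2(\varphi_2(a),y)\}$ for $x\in X_1,y\in X_2$. *)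

From Stdlib Require Import Reals Lra ClassicalEpsilon.
Open Scope R_scope.

Definition dinf (p q : R * R) : R :=
  Rmax (Rabs (fst p - fst q)) (Rabs (snd p - snd q)).

(* Infimum of a set of reals (chosen classically; value 0 if none exists). *)
Definition is_inf (E : R -> Prop) (m : R) : Prop :=
  (forall x, E x -> m <= x) /\
  (forall m', (forall x, E x -> m' <= x) -> m' <= m).

Definition Rinf (E : R -> Prop) : R := epsilon (inhabits 0) (is_inf E).

Definition Hyperconvex (T : Type) (d : T -> T -> R) : Prop :=
  forall (I : Type) (x : I -> T) (r : I -> R),
    (forall i j, d (x i) (x j) <= r i + r j) ->
    exists z : T, forall i, d (x i) z <= r i.

(* Generic gluing of (X1,d1) and (X2,d2) along A via phi1, phi2, as a
   pseudometric on the disjoint union X1 + X2.  The glued metric space is the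
   metric quotient of this pseudometric (identified points, phi1 a ~ phi2 a,
   are exactly the pairs at distance 0). *)
Definition glue_dist {X1 X2 A : Type} (d1 : X1 -> X1 -> R) (d2 : X2 -> X2 -> R)
  (phi1 : A -> X1) (phi2 : A -> X2) (x y : X1 + X2) : R :=
  match x, y with
  | inl x1, inl y1 => d1 x1 y1
  | inr x2, inr y2 => d2 x2 y2
  | inl x1, inr y2 =>
      Rinf (fun t => exists a : A, t = d1 x1 (phi1 a) + d2 (phi2 a) y2)
  | inr x2, inl y1 =>
      Rinf (fun t => exists a : A, t = d1 y1 (phi1 a) + d2 (phi2 a) x2)
  end.

Definition H1 (a : R) : Type := { p : R * R | snd p >= - a * fst p }.
Definition H2 (b : R) : Type := { p : R * R | snd p <= b * fst p }.

Definition dH1 (a : R) (p q : H1 a) : R := dinf (proj1_sig p) (proj1_sig q).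
Definition dH2 (b : R) (p q : H2 b) : R := dinf (proj1_sig p) (proj1_sig q).

Definition phi1 (a : R) (xi : R) : H1 a :=
  exist _ (xi, - a * xi) (Rge_refl (- a * xi)).
Definition phi2 (b : R) (xi : R) : H2 b :=
  exist _ (xi, b * xi) (Rle_refl (b * xi)).

Definition Xcar (a b : R) : Type := (H1 a + H2 b)%type.
Definition dX (a b : R) : Xcar a b -> Xcar a b -> R :=
  glue_dist (dH1 a) (dH2 b) (phi1 a) (phi2 b).

(* For a = b = 0 the glued space is the plane itself, and for a = b = 1 it is
   the plane with H2 rotated by a quarter turn onto the complementary half-plane;
   in both cases a point of the gluing line realises the l_infty distance across
   it, so X is isometric to l_infty^2, which is hyperconvex because its balls are
   products of intervals.  Otherwise 0 < b and a < 1: the balls around (0,K) in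
   H1 and (0,-K), (R0,0) in H2 with radii c, c, R0 - c are pairwise compatible,
   but the last ball forces the common point to have first coordinate at least c,
   and from there crossing a gluing line of slope b > 0 (or -a > -1) to reach one
   of the first two centres costs more than c. *)

From Stdlib Require Import Reals Lra ClassicalEpsilon Classical.
Open Scope R_scope.

Lemma Ropp_le_abs (x : R) : - x <= Rabs x.
Proof. rewrite <- Rabs_Ropp. apply Rle_abs. Qed.

Lemma dinf_fst_le (p q : R * R) : Rabs (fst p - fst q) <= dinf p q.
Proof. apply Rmax_l. Qed.

Lemma dinf_snd_le (p q : R * R) : Rabs (snd p - snd q) <= dinf p q.
Proof. apply Rmax_r. Qed.

Lemma dinf_ge0 (p q : R * R) : 0 <= dinf p q.
Proof. eapply Rle_trans; [apply Rabs_pos | apply dinf_fst_le]. Qed.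

Lemma dinf_le (p q : R * R) (m : R) :
  - m <= fst p - fst q <= m -> - m <= snd p - snd q <= m -> dinf p q <= m.
Proof. intros H1 H2. apply Rmax_lub; apply Rabs_le; assumption. Qed.

Lemma dinf_sym (p q : R * R) : dinf p q = dinf q p.
Proof. unfold dinf. rewrite (Rabs_minus_sym (fst p)), (Rabs_minus_sym (snd p)). reflexivity. Qed.

Lemma dinf_refl (p : R * R) : dinf p p = 0.
Proof. unfold dinf. rewrite !Rminus_diag, Rabs_R0. apply Rmax_left, Rle_refl. Qed.

Lemma dinf_triangle (p q r : R * R) : dinf p r <= dinf p q + dinf q r.
Proof.
  apply Rmax_lub.
  - eapply Rle_trans; [| apply Rplus_le_compat; apply dinf_fst_le].
    replace (fst p - fst r) with ((fst p - fst q) + (fst q - fst r)) by ring.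
    apply Rabs_triang.
  - eapply Rle_trans; [| apply Rplus_le_compat; apply dinf_snd_le].
    replace (snd p - snd r) with ((snd p - snd q) + (snd q - snd r)) by ring.
    apply Rabs_triang.
Qed.

Lemma is_inf_exists (E : R -> Prop) (l : R) :
  (exists x, E x) -> (forall x, E x -> l <= x) -> exists m, is_inf E m.
Proof.
  intros [x0 Hx0] Hl.
  destruct (completeness (fun y => E (- y))) as [m [Hub Hlub]].
  - exists (- l). intros y Hy. specialize (Hl _ Hy). lra.
  - exists (- x0). rewrite Ropp_involutive. exact Hx0.
  - exists (- m). split.
    + intros x Hx. assert (- x <= m) by (apply Hub; rewrite Ropp_involutive; exact Hx). lra.
    + intros m' Hm'. assert (m <= - m') by (apply Hlub; intros y Hy; specialize (Hm' _ Hy); lra). lra.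
Qed.

Lemma Rinf_is_inf (E : R -> Prop) (l : R) :
  (exists x, E x) -> (forall x, E x -> l <= x) -> is_inf E (Rinf E).
Proof. intros HE Hl. unfold Rinf. apply epsilon_spec. exact (is_inf_exists E l HE Hl). Qed.

Section GluedDistance.

Variables a b : R.

Lemma dX_inr_inl (p : H1 a) (q : H2 b) : dX a b (inr q) (inl p) = dX a b (inl p) (inr q).
Proof. reflexivity. Qed.

Lemma dX_sym (u v : Xcar a b) : dX a b u v = dX a b v u.
Proof. destruct u, v; simpl; try reflexivity; apply dinf_sym. Qed.

Lemma dX_refl (u : Xcar a b) : dX a b u u = 0.
Proof. destruct u; apply dinf_refl. Qed.

Lemma dX_inl_inr_is_inf (p : H1 a) (q : H2 b) :
  is_inf (fun t => exists xi, t = dinf (proj1_sig p) (xi, - a * xi) + dinf (xi, b * xi) (proj1_sig q))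
    (dX a b (inl p) (inr q)).
Proof.
  apply (Rinf_is_inf _ 0).
  - eexists. exists 0. reflexivity.
  - intros t [xi ->]. pose proof (dinf_ge0 (proj1_sig p) (xi, - a * xi)).
    pose proof (dinf_ge0 (xi, b * xi) (proj1_sig q)). lra.
Qed.

Lemma dX_inl_inr_le (p : H1 a) (q : H2 b) (xi : R) :
  dX a b (inl p) (inr q) <= dinf (proj1_sig p) (xi, - a * xi) + dinf (xi, b * xi) (proj1_sig q).
Proof. apply (proj1 (dX_inl_inr_is_inf p q)). exists xi. reflexivity. Qed.

Lemma dX_inl_inr_ge (p : H1 a) (q : H2 b) (m : R) :
  (forall xi, m <= dinf (proj1_sig p) (xi, - a * xi) + dinf (xi, b * xi) (proj1_sig q)) ->
  m <= dX a b (inl p) (inr q).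
Proof. intros H. apply (proj2 (dX_inl_inr_is_inf p q)). intros t [xi ->]. apply H. Qed.

Lemma dX_inl_inr_fst_le (p : H1 a) (q : H2 b) :
  Rabs (fst (proj1_sig p) - fst (proj1_sig q)) <= dX a b (inl p) (inr q).
Proof.
  apply dX_inl_inr_ge. intros xi.
  pose proof (dinf_fst_le (proj1_sig p) (xi, - a * xi)).
  pose proof (dinf_fst_le (xi, b * xi) (proj1_sig q)). simpl in *.
  replace (fst (proj1_sig p) - fst (proj1_sig q))
    with ((fst (proj1_sig p) - xi) + (xi - fst (proj1_sig q))) by ring.
  pose proof (Rabs_triang (fst (proj1_sig p) - xi) (xi - fst (proj1_sig q))). lra.
Qed.

(* The cost of reaching height -K (resp. K) across a gluing line of slope b
   (resp. -a) from a point with first coordinate z. *)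
Lemma abs_path_ge (s K z xi : R) : 0 <= s <= 1 -> K + s * z <= Rabs (z - xi) + Rabs (K + s * xi).
Proof.
  intros Hs. pose proof (Rle_abs (K + s * xi)).
  pose proof (Rle_abs (z - xi)). pose proof (Ropp_le_abs (z - xi)).
  destruct (Rle_or_lt xi z); nra.
Qed.

Lemma dX_inl_inr_ge_H2_axis (p : H1 a) (q : H2 b) (K : R) :
  0 <= b <= 1 -> proj1_sig q = (0, - K) -> K + b * fst (proj1_sig p) <= dX a b (inl p) (inr q).
Proof.
  intros Hb Hq. apply dX_inl_inr_ge. intros xi.
  pose proof (dinf_fst_le (proj1_sig p) (xi, - a * xi)).
  pose proof (dinf_snd_le (xi, b * xi) (proj1_sig q)). rewrite Hq in *. simpl in *.
  replace (b * xi - - K) with (K + b * xi) in * by ring.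
  pose proof (abs_path_ge b K (fst (proj1_sig p)) xi Hb). lra.
Qed.

Lemma dX_inl_inr_ge_H1_axis (p : H1 a) (q : H2 b) (K : R) :
  0 <= a <= 1 -> proj1_sig p = (0, K) -> K + a * fst (proj1_sig q) <= dX a b (inl p) (inr q).
Proof.
  intros Ha Hp. apply dX_inl_inr_ge. intros xi.
  pose proof (dinf_snd_le (proj1_sig p) (xi, - a * xi)).
  pose proof (dinf_fst_le (xi, b * xi) (proj1_sig q)). rewrite Hp in *. simpl in *.
  replace (K - - a * xi) with (K + a * xi) in * by ring.
  rewrite Rabs_minus_sym in *.
  pose proof (abs_path_ge a K (fst (proj1_sig q)) xi Ha). lra.
Qed.

End GluedDistance.

Lemma hyperconvex_R : Hyperconvex R (fun x y => Rabs (x - y)).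
Proof.
  intros I x r H.
  destruct (classic (inhabited I)) as [[i0] | nI].
  2:{ exists 0. intros i. exfalso. apply nI. constructor. exact i. }
  assert (Hc : forall i j, x i - r i <= x j + r j).
  { intros i j. pose proof (H i j). pose proof (Rle_abs (x i - x j)). lra. }
  destruct (completeness (fun t => exists i, t = x i - r i)) as [m [Hub Hlub]].
  - exists (x i0 + r i0). intros t [i ->]. apply Hc.
  - exists (x i0 - r i0). exists i0. reflexivity.
  - exists m. intros i. apply Rabs_le.
    assert (x i - r i <= m) by (apply Hub; exists i; reflexivity).
    assert (m <= x i + r i) by (apply Hlub; intros t [j ->]; apply Hc). lra.
Qed.

Lemma hyperconvex_prod_max (X Y : Type) (dx : X -> X -> R) (dy : Y -> Y -> R) :
  Hyperconvex X dx -> Hyperconvex Y dy ->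
  Hyperconvex (X * Y) (fun p q => Rmax (dx (fst p) (fst q)) (dy (snd p) (snd q))).
Proof.
  intros HX HY I x r H.
  destruct (HX I (fun i => fst (x i)) r) as [zx Hzx].
  { intros i j. eapply Rle_trans; [apply Rmax_l | apply H]. }
  destruct (HY I (fun i => snd (x i)) r) as [zy Hzy].
  { intros i j. eapply Rle_trans; [apply Rmax_r | apply H]. }
  exists (zx, zy). intros i. apply Rmax_lub; [apply Hzx | apply Hzy].
Qed.

Lemma hyperconvex_plane : Hyperconvex (R * R) dinf.
Proof. exact (hyperconvex_prod_max _ _ _ _ hyperconvex_R hyperconvex_R). Qed.

Lemma Hyperconvex_isometry_surj (X Y : Type) (dx : X -> X -> R) (dy : Y -> Y -> R) (f : X -> Y) :
  (forall u v, dy (f u) (f v) = dx u v) -> (forall y, exists u, f u = y) ->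
  Hyperconvex Y dy -> Hyperconvex X dx.
Proof.
  intros Hiso Hsurj HY I x r H.
  destruct (HY I (fun i => f (x i)) r) as [w Hw].
  { intros i j. rewrite Hiso. apply H. }
  destruct (Hsurj w) as [z <-]. exists z. intros i. rewrite <- Hiso. apply Hw.
Qed.

(* [g] unfolds H2 onto the complement of H1 in the plane, matching the two
   copies of the gluing line; [g_geodesic] says that distances across the line
   are realised through it, so X becomes isometric to the plane. *)
Lemma Hyperconvex_glue_of_unfolding (a b : R) (g : R * R -> R * R)
  (g_iso : forall p q, dinf (g p) (g q) = dinf p q)
  (g_line : forall xi, g (xi, b * xi) = (xi, - a * xi))
  (g_geodesic : forall p q, snd p >= - a * fst p -> snd q <= b * fst q ->
     exists xi, dinf p (xi, - a * xi) + dinf (xi, b * xi) q <= dinf p (g q))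
  (g_onto : forall w, snd w < - a * fst w -> exists q, snd q <= b * fst q /\ g q = w) :
  Hyperconvex (Xcar a b) (dX a b).
Proof.
  pose (f := fun u : Xcar a b => match u with inl p => proj1_sig p | inr q => g (proj1_sig q) end).
  apply (Hyperconvex_isometry_surj _ _ _ dinf f); [| | exact hyperconvex_plane].
  - assert (Hcross : forall (p : H1 a) (q : H2 b),
               dinf (proj1_sig p) (g (proj1_sig q)) = dX a b (inl p) (inr q)).
    { intros [p hp] [q hq]. apply Rle_antisym.
      - apply dX_inl_inr_ge. intros xi. simpl.
        rewrite <- (g_iso (xi, b * xi) q), g_line. apply dinf_triangle.
      - destruct (g_geodesic p q hp hq) as [xi Hxi].
        eapply Rle_trans; [apply dX_inl_inr_le | exact Hxi]. }
    intros [p | q] [p' | q']; simpl.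
    + reflexivity.
    + apply Hcross.
    + rewrite dinf_sym, Hcross. reflexivity.
    + apply g_iso.
  - intros w. destruct (Rlt_or_le (snd w) (- a * fst w)) as [Hw | Hw].
    + destruct (g_onto w Hw) as [q [hq <-]]. exists (inr (exist _ q hq)). reflexivity.
    + exists (inl (exist (fun p : R * R => snd p >= - a * fst p) w (Rle_ge _ _ Hw))). reflexivity.
Qed.

Ltac split_abs_max :=
  repeat match goal with
  | |- context [Rabs ?x] => destruct (Rle_or_lt 0 x);
      [rewrite (Rabs_right x) by lra | rewrite (Rabs_left x) by lra]
  | |- context [Rmax ?x ?y] => destruct (Rle_or_lt x y);
      [rewrite (Rmax_right x y) by lra | rewrite (Rmax_left x y) by lra]
  | |- context [Rmin ?x ?y] => destruct (Rle_or_lt x y);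
      [rewrite (Rmin_left x y) by lra | rewrite (Rmin_right x y) by lra]
  end.

(* The witness is the point of [p1 - p2, p1 + p2] closest to [q1 + q2, q1 - q2];
   these are the traces on the axis of the balls B(p, p2) and B(q, -q2). *)
Lemma Hyperconvex_X00 : Hyperconvex (Xcar 0 0) (dX 0 0).
Proof.
  apply (Hyperconvex_glue_of_unfolding 0 0 (fun p => p)).
  - reflexivity.
  - intros xi. f_equal. ring.
  - intros [p1 p2] [q1 q2]; simpl; intros hp hq.
    exists (Rmin (Rmax (q1 + q2) (p1 - p2)) (p1 + p2)).
    unfold dinf; simpl. split_abs_max; lra.
  - intros w Hw. exists w. split; [lra | reflexivity].
Qed.

Lemma Hyperconvex_X11 : Hyperconvex (Xcar 1 1) (dX 1 1).
Proof.
  apply (Hyperconvex_glue_of_unfolding 1 1 (fun p => (snd p, - fst p))).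
  - intros [p1 p2] [q1 q2]. unfold dinf; simpl.
    replace (- p1 - - q1) with (- (p1 - q1)) by ring. rewrite Rabs_Ropp. apply Rmax_comm.
  - intros xi. simpl. f_equal; ring.
  - intros [p1 p2] [q1 q2]; simpl; intros hp hq.
    exists ((p1 - p2) / 2). unfold dinf; simpl. split_abs_max; lra.
  - intros [w1 w2] Hw. simpl in Hw. exists (- w2, w1). simpl. split; [lra | f_equal; ring].
Qed.

Lemma Hyperconvex_three_balls (T : Type) (d : T -> T -> R)
  (d_sym : forall u v, d u v = d v u) (d_refl : forall u, d u u = 0) :
  Hyperconvex T d -> forall (x1 x2 x3 : T) (r1 r2 r3 : R),
  0 <= r1 -> 0 <= r2 -> 0 <= r3 ->
  d x1 x2 <= r1 + r2 -> d x1 x3 <= r1 + r3 -> d x2 x3 <= r2 + r3 ->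
  exists z, d x1 z <= r1 /\ d x2 z <= r2 /\ d x3 z <= r3.
Proof.
  intros Hhc x1 x2 x3 r1 r2 r3 h1 h2 h3 h12 h13 h23.
  destruct (Hhc (option bool) (fun i => match i with None => x1 | Some true => x2 | Some false => x3 end)
              (fun i => match i with None => r1 | Some true => r2 | Some false => r3 end))
    as [z Hz].
  - intros [[] |] [[] |]; rewrite ?d_refl, 1?(d_sym x2 x1), 1?(d_sym x3 x1), 1?(d_sym x3 x2); lra.
  - exists z. split; [exact (Hz None) | split; [exact (Hz (Some true)) | exact (Hz (Some false))]].
Qed.

Section Counterexample.

Variables a b : R.
Hypotheses (ha : 0 <= a) (hab : a <= b) (hb : b <= 1) (ha1 : a < 1) (hb0 : 0 < b).

Let K := 2 * (1 + b) * (1 - a).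
Let c := (1 - a) * (2 + b - a).
Let R0 := 4 * (1 + b).

Lemma no_common_point_in_H1 (z : H1 a) (P' Q : H2 b) :
  proj1_sig P' = (0, - K) -> proj1_sig Q = (R0, 0) ->
  dX a b (inl z) (inr P') <= c -> dX a b (inl z) (inr Q) <= R0 - c -> False.
Proof.
  intros HP' HQ Hc HRc.
  pose proof (dX_inl_inr_ge_H2_axis a b z P' K (conj (Rlt_le _ _ hb0) hb) HP').
  pose proof (dX_inl_inr_fst_le a b z Q). rewrite HQ in *. simpl in *.
  pose proof (Ropp_le_abs (fst (proj1_sig z) - R0)).
  assert (Hcz : c <= fst (proj1_sig z)) by lra.
  assert (0 <= b * (fst (proj1_sig z) - c)) by (apply Rmult_le_pos; lra).
  assert (0 < (1 - a) * (3 * b + a * (1 - b) + b * b)) by (apply Rmult_lt_0_compat; nra).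
  assert (K + b * c > c) by (unfold K, c; nra).
  lra.
Qed.

Lemma no_common_point_in_H2 (P : H1 a) (Q z : H2 b) :
  proj1_sig P = (0, K) -> proj1_sig Q = (R0, 0) ->
  dX a b (inl P) (inr z) <= c -> dX a b (inr Q) (inr z) <= R0 - c -> False.
Proof.
  intros HP HQ Hc HRc.
  pose proof (dX_inl_inr_ge_H1_axis a b P z K (conj ha (Rlt_le _ _ ha1)) HP).
  change (dinf (proj1_sig Q) (proj1_sig z) <= R0 - c) in HRc.
  pose proof (dinf_fst_le (proj1_sig Q) (proj1_sig z)). rewrite HQ in *. simpl in *.
  pose proof (Rle_abs (R0 - fst (proj1_sig z))).
  assert (Hcz : c <= fst (proj1_sig z)) by lra.
  assert (0 <= a * (fst (proj1_sig z) - c)) by (apply Rmult_le_pos; lra).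
  assert (0 < (1 - a) * (b + a * (3 + b - a))) by (apply Rmult_lt_0_compat; nra).
  assert (K + a * c > c) by (unfold K, c; nra).
  lra.
Qed.

Lemma not_Hyperconvex_X : ~ Hyperconvex (Xcar a b) (dX a b).
Proof.
  intros Hhc.
  assert (hP : K >= - a * 0) by (unfold K; nra).
  assert (hP' : - K <= b * 0) by (unfold K; nra).
  assert (hQ : 0 <= b * R0) by (unfold R0; nra).
  pose (P := exist (fun p : R * R => snd p >= - a * fst p) (0, K) hP).
  pose (P' := exist (fun p : R * R => snd p <= b * fst p) (0, - K) hP').
  pose (Q := exist (fun p : R * R => snd p <= b * fst p) (R0, 0) hQ).
  assert (HPP' : dX a b (inl P) (inr P') <= c + c).
  { eapply Rle_trans; [apply (dX_inl_inr_le a b P P' (- 2 * (1 - a))) |]. simpl.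
    assert (dinf (0, K) (- 2 * (1 - a), - a * (- 2 * (1 - a))) <= 2 * (1 - a) * (1 + b - a))
      by (apply dinf_le; simpl; unfold K; nra).
    assert (dinf (- 2 * (1 - a), b * (- 2 * (1 - a))) (0, - K) <= 2 * (1 - a))
      by (apply dinf_le; simpl; unfold K; nra).
    unfold c. lra. }
  assert (HPQ : dX a b (inl P) (inr Q) <= c + (R0 - c)).
  { eapply Rle_trans; [apply (dX_inl_inr_le a b P Q (2 * (1 + b))) |]. simpl.
    assert (dinf (0, K) (2 * (1 + b), - a * (2 * (1 + b))) <= 2 * (1 + b))
      by (apply dinf_le; simpl; unfold K; nra).
    assert (dinf (2 * (1 + b), b * (2 * (1 + b))) (R0, 0) <= 2 * (1 + b))
      by (apply dinf_le; simpl; unfold R0; nra).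
    unfold R0 in *. lra. }
  assert (HP'Q : dX a b (inr P') (inr Q) <= c + (R0 - c)).
  { simpl. unfold dH2. simpl. apply dinf_le; simpl; unfold K, R0; nra. }
  assert (Hc0 : 0 <= c) by (unfold c; nra).
  assert (HcR : 0 <= R0 - c) by (unfold c, R0; nra).
  destruct (Hyperconvex_three_balls _ _ (dX_sym a b) (dX_refl a b) Hhc
              (inl P) (inr P') (inr Q) c c (R0 - c) Hc0 Hc0 HcR HPP' HPQ HP'Q)
    as [[z | z] [Hz1 [Hz2 Hz3]]].
  - rewrite dX_inr_inl in Hz2, Hz3.
    exact (no_common_point_in_H1 z P' Q eq_refl eq_refl Hz2 Hz3).
  - exact (no_common_point_in_H2 P Q z eq_refl eq_refl Hz1 Hz3).
Qed.

End Counterexample.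

Theorem mainTheorem18 (a b : R) (ha : 0 <= a) (hab : a <= b) (hb : b <= 1) :
  Hyperconvex (Xcar a b) (dX a b) <-> ((a = 0 /\ b = 0) \/ (a = 1 /\ b = 1)).
Proof.
  split.
  - intros Hhc.
    destruct (Req_dec b 0) as [Hb0 | Hb0]; [left; lra |].
    destruct (Req_dec a 1) as [Ha1 | Ha1]; [right; lra |].
    exfalso. eapply not_Hyperconvex_X; [.. | exact Hhc]; lra.
  - intros [[-> ->] | [-> ->]]; [exact Hyperconvex_X00 | exact Hyperconvex_X11].
Qed.
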